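(* Let $0<t_0\le1/2$, $t\in[t_0,1]$. For every $\ell\in\mathbb Z_+$ and every sufficiently smooth $g$ on $\mathbb T^3\times\mathbb R^3$: if $\ell$ is even then $\|\Lambda^\ell g\|_{(2,0)}^2\le\|M^{\ell/2}g\|_{(2,0)}^2$; if $\ell$ is odd then $$\|\Lambda^\ell g\|_{(2,0)}^2\le\|M^{\ell/2}g\|_{(2,0)}^2\le\|M^{(\ell+1)/2}g\|_{(2,0)}\|M^{(\ell-1)/2}g\|_{(2,0)}.$$
   Context: $(m,\eta)\in\mathbb Z^3\times\mathbb R^3$ are Fourier dual variables of $(x,v)\in\mathbb T^3\times\mathbb R^3$. For $\sigma\ge0$, $M^\sigma$ is the Fourier multiplier with symbol $\big((t-t_0)\eta_1^2+(t-t_0)^2m_1\eta_1+\frac{(t-t_0)^3}{3}m_1^2\big)^\sigma$; $M=M^1=-(t-t_0)\partial_{v_1}^2-(t-t_0)^2\partial_{x_1}\partial_{v_1}-\frac{(t-t_0)^3}{3}\partial_{x_1}^2$. $\Lambda_1=\frac{1}{2\sqrt{-1}}((t-t_0)^{1/2}\partial_{v_1}+(t-t_0)^{3/2}\partial_{x_1})$, $\Lambda_2=\frac{\sqrt3}{6\sqrt{-1}}(3(t-t_0)^{1/2}\partial_{v_1}+(t-t_0)^{3/2}\partial_{x_1})$. For a norm $\|\cdot\|$, $\|\Lambda^\ell g\|:=\big(\sum_{j_1,\dots,j_\ell\in\{1,2\}}\|\Lambda_{j_1}\cdots\Lambda_{j_\ell}g\|^2\big)^{1/2}$. $\|u\|_{(2,0)}^2=\sum_{|\alpha|\le2}\|\partial_x^\alpha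 u\|_{L^2(\mathbb T^3\times\mathbb R^3)}^2$. *)

From HB Require Import structures.
From mathcomp Require Import all_boot all_order all_algebra.
From mathcomp Require Import all_classical all_reals all_analysis.
From mathcomp Require Import complex.

Set Implicit Arguments. Unset Strict Implicit. Unset Printing Implicit Defensive.
Import Order.TTheory GRing.Theory Num.Theory.
Import numFieldNormedType.Exports.
Local Open Scope classical_set_scope.
Local Open Scope ring_scope.
Local Open Scope complex_scope.

(* Points of R^3 (and of T^3 = (R/2piZ)^3, via 2pi-periodic representatives)
   are triples ((a1, a2), a3); frequencies m in Z^3 are triples of ints. *)
Notation R3 R := ((R * R) * R)%type.
Notation Z3 := ((int * int) * int)%type.
(* Points (x, v) of R^3 x R^3, written as a left-nested 6-tuple
   (((((x1, x2), x3), v1), v2), v3). *)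
Notation R6 R := (((((R * R) * R) * R) * R) * R)%type.

Notation leb3 R := ((@lebesgue_measure R \x @lebesgue_measure R)
                      \x @lebesgue_measure R)%E.
Notation leb6 R := (((((@lebesgue_measure R \x @lebesgue_measure R)
   \x @lebesgue_measure R) \x @lebesgue_measure R) \x @lebesgue_measure R)
   \x @lebesgue_measure R)%E.

Section Defs.
Variable R : realType.

Definition xpart (p : R6 R) : R3 R := (p.1.1.1.1.1, p.1.1.1.1.2, p.1.1.1.2).
Definition vpart (p : R6 R) : R3 R := (p.1.1.2, p.1.2, p.2).

(* fundamental cell [0, 2pi)^3 of the torus T^3 *)
Definition cell : set (R3 R) :=
  (`[0, 2 * pi[%classic `*` `[0, 2 * pi[%classic) `*` `[0, 2 * pi[%classic.

Definition dot3 (a b : R3 R) : R := a.1.1 * b.1.1 + a.1.2 * b.1.2 + a.2 * b.2.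
Definition ofZ3 (m : Z3) : R3 R := (m.1.1%:~R, m.1.2%:~R, m.2%:~R).

Definition expi (th : R) : R[i] := (cos th) +i* (sin th).

(* g : T^3 x R^3 -> C, represented as a function on R^3 x R^3 which is
   2pi-periodic in each x-coordinate *)
Definition periodic_x (g : R3 R -> R3 R -> R[i]) : Prop :=
  forall (x v : R3 R),
    [/\ g (x.1.1 + 2 * pi, x.1.2, x.2) v = g x v,
        g (x.1.1, x.1.2 + 2 * pi, x.2) v = g x v &
        g (x.1.1, x.1.2, x.2 + 2 * pi) v = g x v].

Definition fourier_integrand (g : R3 R -> R3 R -> R[i]) (m : Z3) (eta : R3 R)
  (p : R6 R) : R[i] :=
  g (xpart p) (vpart p) * expi (- (dot3 (ofZ3 m) (xpart p) + dot3 eta (vpart p))).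

Definition fourier (g : R3 R -> R3 R -> R[i]) (m : Z3) (eta : R3 R) : R[i] :=
  (Rintegral (leb6 R) (xpart @^-1` cell)
     (fun p => complex.Re (fourier_integrand g m eta p))) +i*
  (Rintegral (leb6 R) (xpart @^-1` cell)
     (fun p => complex.Im (fourier_integrand g m eta p))).

Definition csq (z : R[i]) : R := complex.Re z ^+ 2 + complex.Im z ^+ 2.

Definition symbol := Z3 -> R3 R -> R[i].
Definition mult (p : symbol) (F : Z3 -> R3 R -> R[i]) : Z3 -> R3 R -> R[i] :=
  fun m eta => p m eta * F m eta.

(* || u ||_{L^2(T^3 x R^3)}^2 of the function u with Fourier transform F,
   given by Plancherel: (2 pi)^-6 sum_m int |F(m,eta)|^2 d eta *)
Definition L2sq (F : Z3 -> R3 R -> R[i]) : \bar R :=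
  (((2 * pi) ^- 6)%:E *
   \esum_(m in [set: Z3]) \int[leb3 R]_eta (csq (F m eta))%:E)%E.

Definition sym_dx1 : symbol := fun m _ => 'i * m.1.1%:~R.
Definition sym_dx2 : symbol := fun m _ => 'i * m.1.2%:~R.
Definition sym_dx3 : symbol := fun m _ => 'i * m.2%:~R.
Definition sym_dv1 : symbol := fun _ eta => 'i * (eta.1.1)%:C.

Definition sym_dxalpha (a : 'I_3 * 'I_3 * 'I_3) : symbol := fun m eta =>
  sym_dx1 m eta ^+ a.1.1 * sym_dx2 m eta ^+ a.1.2 * sym_dx3 m eta ^+ a.2.

Definition norm20sq (F : Z3 -> R3 R -> R[i]) : \bar R :=
  (\sum_(a : 'I_3 * 'I_3 * 'I_3 | (a.1.1 + a.1.2 + a.2 <= 2)%N)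
     L2sq (mult (sym_dxalpha a) F))%E.

(* tau stands for t - t0 *)
(* symbol of M = -tau d_{v1}^2 - tau^2 d_{x1} d_{v1} - tau^3/3 d_{x1}^2 *)
Definition Msym (tau : R) (m : Z3) (eta : R3 R) : R :=
  tau * eta.1.1 ^+ 2 + tau ^+ 2 * m.1.1%:~R * eta.1.1
  + tau ^+ 3 / 3 * m.1.1%:~R ^+ 2.

Definition Mpow_sym (tau sigma : R) : symbol :=
  fun m eta => ((Msym tau m eta) `^ sigma)%:C.

Definition Lam1_sym (tau : R) : symbol := fun m eta =>
  (2 * 'i)^-1 * ((tau `^ (1/2))%:C * sym_dv1 m eta
                 + (tau `^ (3/2))%:C * sym_dx1 m eta).
Definition Lam2_sym (tau : R) : symbol := fun m eta =>
  (Num.sqrt 3)%:C / (6 * 'i) * (3 * (tau `^ (1/2))%:C * sym_dv1 m eta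
                                + (tau `^ (3/2))%:C * sym_dx1 m eta).

Definition Lam_sym (tau : R) (j : 'I_2) : symbol :=
  if j == ord0 then Lam1_sym tau else Lam2_sym tau.

Definition LamPow_norm20sq (tau : R) (l : nat) (g : R3 R -> R3 R -> R[i])
  : \bar R :=
  (\sum_(j : l.-tuple 'I_2)
     norm20sq (foldr (fun k G => mult (Lam_sym tau k) G) (fourier g) j))%E.

Definition Mpow_norm20sq (tau sigma : R) (g : R3 R -> R3 R -> R[i]) : \bar R :=
  norm20sq (mult (Mpow_sym tau sigma) (fourier g)).

End Defs.

From HB Require Import structures.
From mathcomp Require Import all_boot all_order all_algebra.
From mathcomp Require Import all_classical all_reals all_analysis.
From mathcomp Require Import complex ring lra measurable_realfun.
Set Implicit Arguments. Unset Strict Implicit. Unset Printing Implicit Defensive.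
Import Order.TTheory GRing.Theory Num.Theory.
Local Open Scope classical_set_scope.
Local Open Scope ring_scope.

(* On the Fourier side every operator involved is a multiplier, and all the
   norms are integrals of |ghat|^2 against nonnegative weights. With
   s = tau^(1/2), the symbols of Lambda_1 and Lambda_2 are the real affine
   functions (s eta_1 + s^3 m_1)/2 and sqrt 3 (3 s eta_1 + s^3 m_1)/6, whose
   squares add up to the symbol of M. Expanding (|Lambda_1|^2 + |Lambda_2|^2)^l
   over words therefore gives ||Lambda^l g||^2 = ||M^(l/2) g||^2 exactly. For
   the interpolation inequality, x^(n+1) <= lam/2 x^(n+2) + 1/(2 lam) x^n
   pointwise for x >= 0 and every lam > 0; since the weighted norm is additive,
   positively homogeneous and monotone in the weight, the same bound holds for
   the norms, and optimizing over lam yields the geometric mean. *)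

Lemma sum_tuple_prod (S : comNzSemiRingType) (I : finType) (l : nat) (c : I -> S) :
  \sum_(j : l.-tuple I) \prod_(k <- j) c k = (\sum_k c k) ^+ l.
Proof.
elim: l => [|l IH].
  rewrite expr0 (big_pred1 [tuple]) ?big_nil // => t.
  by apply/esym/eqP; exact: tuple0.
rewrite (reindex (fun p : I * l.-tuple I => cons_tuple p.1 p.2)) /=; last first.
  exists (fun t => (thead t, behead_tuple t)) => [[k t] _ | t _].
    by congr pair; apply: val_inj.
  by rewrite [RHS]tuple_eta.
rewrite -(pair_big xpredT xpredT
  (fun i (j : l.-tuple I) => \prod_(k <- cons_tuple i j) c k)) /=.
under eq_bigr => i _ do under eq_bigr => j _ do rewrite big_cons.
under eq_bigr => i _ do rewrite -mulr_sumr IH.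
by rewrite -mulr_suml exprS mulrC.
Qed.

Section RealLemmas.
Variable R : realType.

Lemma powR_halfE (x : R) (n : nat) : 0 <= x -> x `^ (n%:R / 2) = (x `^ (1 / 2)) ^+ n.
Proof. by move=> x_ge0; rewrite -powR_mulrn ?powR_ge0 // -powRrM mul1r mulrC. Qed.

Lemma powR_half_sqr (x : R) (n : nat) : 0 <= x -> (x `^ (n%:R / 2)) ^+ 2 = x ^+ n.
Proof.
move=> x_ge0; rewrite -powR_mulrn ?powR_ge0 // -powRrM.
by rewrite divfK ?pnatr_eq0 // powR_mulrn.
Qed.

Lemma exprS_le_AMGM (x lam : R) (n : nat) : 0 <= x -> 0 < lam ->
  x ^+ n.+1 <= lam / 2 * x ^+ n.+2 + lam^-1 / 2 * x ^+ n.
Proof.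
move=> x_ge0 lam_gt0; rewrite -subr_ge0.
have -> : lam / 2 * x ^+ n.+2 + lam^-1 / 2 * x ^+ n - x ^+ n.+1
    = x ^+ n * ((lam * x - 1) ^+ 2 / (2 * lam)).
  by rewrite !exprS; field; exact: lt0r_neq0.
by rewrite mulr_ge0 ?exprn_ge0 // divr_ge0 ?sqr_ge0 // mulr_ge0 // ltW.
Qed.

Lemma le_sqrtM_AMGM (X A B : R) : 0 <= X -> 0 <= A -> 0 <= B ->
  (forall lam, 0 < lam -> X <= lam / 2 * A + lam^-1 / 2 * B) ->
  X <= Num.sqrt A * Num.sqrt B.
Proof.
move=> X_ge0 A_ge0 B_ge0 amgm.
rewrite -sqrtrM // -(ger0_norm X_ge0) -sqrtr_sqr ler_sqrt ?mulr_ge0 //.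
have [->|X_neq0] := eqVneq X 0; first by rewrite expr0n mulr_ge0.
have X_gt0 : 0 < X by rewrite lt_def X_neq0.
have [A0|A_neq0] := eqVneq A 0.
  (* for A = 0, lam = (B + 1) / X pushes the bound below X *)
  have lam_gt0 : 0 < (B + 1) / X by rewrite divr_gt0 // ltr_wpDl.
  have := amgm _ lam_gt0; rewrite A0 mulr0 add0r invf_div.
  have -> : X / (B + 1) / 2 * B = X * (B / (2 * (B + 1))).
    by field; rewrite gt_eqF // ltr_wpDl.
  have : B / (2 * (B + 1)) < 1 by rewrite ltr_pdivrMr ?mulr_gt0 ?ltr_wpDl //; lra.
  nra.
have A_gt0 : 0 < A by rewrite lt_def A_neq0.
(* lam = X / A turns the bound into X <= (X ^+ 2 + A * B) / (2 * X) *)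
have := amgm (X / A) (divr_gt0 X_gt0 A_gt0).
have -> : X / A / 2 * A + (X / A)^-1 / 2 * B = (X ^+ 2 + A * B) / (2 * X).
  by field; rewrite X_neq0 A_neq0.
by rewrite ler_pdivlMr ?mulr_gt0 //; nra.
Qed.

Local Open Scope ereal_scope.

Lemma lee_sqrteM_AMGM (X A B : \bar R) :
  0 <= X -> 0 <= A -> 0 <= B -> X < +oo -> A < +oo -> B < +oo ->
  (forall lam, (0 < lam)%R -> X <= (lam / 2)%:E * A + (lam^-1 / 2)%:E * B) ->
  X <= sqrte A * sqrte B.
Proof.
case: X A B => [x||] // [a||] // [b||] // x0 a0 b0 _ _ _ amgm.
by rewrite /= -EFinM lee_fin le_sqrtM_AMGM -?lee_fin.
Qed.

End RealLemmas.

Section Csq.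
Variable R : realType.
Local Open Scope complex_scope.

Lemma csqC (x : R) : csq x%:C = x ^+ 2.
Proof. by rewrite /csq /= expr0n /= addr0. Qed.

Lemma csqM (x y : R[i]) : csq (x * y) = csq x * csq y.
Proof. by case: x => a b; case: y => c d; rewrite /csq /=; ring. Qed.

Lemma csq_ge0 (x : R[i]) : 0 <= csq x.
Proof. by rewrite addr_ge0 // sqr_ge0. Qed.

Lemma csq_prod (I : Type) (s : seq I) (f : I -> R[i]) :
  csq (\prod_(k <- s) f k) = \prod_(k <- s) csq (f k).
Proof.
elim: s => [|k s IH]; first by rewrite !big_nil -[1]/(1%:C) csqC expr1n.
by rewrite !big_cons csqM IH.
Qed.

Lemma measurable_csq (d : measure_display) (T : measurableType d)
    (f : T -> R[i]) :
  measurable_fun setT (fun x => complex.Re (f x)) ->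
  measurable_fun setT (fun x => complex.Im (f x)) ->
  measurable_fun setT (fun x => csq (f x)).
Proof. by move=> mRe mIm; apply: measurable_funD; apply: measurable_funX. Qed.

End Csq.

Section WeightedNorm.
Variable R : realType.
Local Open Scope ereal_scope.

Definition weight (w : Z3 -> R3 R -> R) :=
  (forall m eta, (0 <= w m eta)%R) /\ (forall m, measurable_fun setT (w m)).

Lemma weight_cst (c : R) : (0 <= c)%R -> weight (fun _ _ => c).
Proof. by move=> c_ge0; split => // m; exact: measurable_cst. Qed.

Lemma weightD w1 w2 : weight w1 -> weight w2 ->
  weight (fun m eta => w1 m eta + w2 m eta)%R.
Proof.
move=> [w1_ge0 mw1] [w2_ge0 mw2]; split => [m eta|m]; first by rewrite addr_ge0.
exact: measurable_funD.
Qed.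

Lemma weightM w1 w2 : weight w1 -> weight w2 ->
  weight (fun m eta => w1 m eta * w2 m eta)%R.
Proof.
move=> [w1_ge0 mw1] [w2_ge0 mw2]; split => [m eta|m]; first by rewrite mulr_ge0.
exact: measurable_funM.
Qed.

Lemma weight_sum (I : Type) (s : seq I) (w : I -> Z3 -> R3 R -> R) :
  (forall i, weight (w i)) -> weight (fun m eta => \sum_(i <- s) w i m eta)%R.
Proof.
move=> ww; elim: s => [|i s IH].
  by under eq_fun do under eq_fun do rewrite big_nil; exact: weight_cst.
by under eq_fun do under eq_fun do rewrite big_cons; exact: weightD.
Qed.

Lemma weight_prod (I : Type) (s : seq I) (w : I -> Z3 -> R3 R -> R) :
  (forall i, weight (w i)) -> weight (fun m eta => \prod_(i <- s) w i m eta)%R.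
Proof.
move=> ww; elim: s => [|i s IH].
  by under eq_fun do under eq_fun do rewrite big_nil; exact: weight_cst.
by under eq_fun do under eq_fun do rewrite big_cons; exact: weightM.
Qed.

Definition wnorm20sq (F : Z3 -> R3 R -> R[i]) (w : Z3 -> R3 R -> R) : \bar R :=
  \sum_(a : 'I_3 * 'I_3 * 'I_3 | (a.1.1 + a.1.2 + a.2 <= 2)%N)
     (((2 * pi) ^- 6)%:E * \esum_(m in [set: Z3]) \int[leb3 R]_eta
        (csq (sym_dxalpha a m eta) * w m eta * csq (F m eta))%:E).

Lemma norm20sq_mult (P : symbol R) F :
  norm20sq (mult P F) = wnorm20sq F (fun m eta => csq (P m eta)).
Proof.
apply: eq_bigr => a _; congr (_ * _).
apply: eq_esum => m _; apply: eq_integral => eta _.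
by rewrite /mult !csqM mulrA.
Qed.

Lemma esumZl_le (T : choiceType) (S : set T) (c : R) (a : T -> \bar R) :
  (forall i, 0 <= a i) -> (0 <= c)%R ->
  \esum_(i in S) (c%:E * a i) <= c%:E * \esum_(i in S) a i.
Proof.
move=> a_ge0 c_ge0; apply: ge_ereal_sup => _ [X [finX XS] <-].
rewrite fsbig_finite // -ge0_sume_distrr //.
apply: lee_wpmul2l; first by rewrite lee_fin.
by rewrite -fsbig_finite //; apply: esum_ge; exists X.
Qed.

Variable F : Z3 -> R3 R -> R[i].
Hypothesis mF : forall m, measurable_fun setT (fun eta => csq (F m eta)).

Let inv_2pi6_ge0 : (0 <= (2 * pi) ^- 6 :> R)%R.
Proof. by rewrite invr_ge0 exprn_ge0 // mulr_ge0 // pi_ge0. Qed.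

Let integrand a w m eta :=
  (csq (sym_dxalpha a m eta) * w m eta * csq (F m eta))%:E.

Let integrand_ge0 a w m eta : weight w -> 0 <= integrand a w m eta.
Proof. by case=> w_ge0 _; rewrite lee_fin !mulr_ge0 // csq_ge0. Qed.

Let measurable_integrand a w m : weight w -> measurable_fun setT (integrand a w m).
Proof.
case=> _ mw; apply/measurable_EFinP.
apply: measurable_funM => //; apply: measurable_funM => //.
exact: (measurable_cst (csq (sym_dxalpha a m (0, 0, 0)))%R).
Qed.

Let esum_integral_ge0 a w : weight w ->
  0 <= \esum_(m in [set: Z3]) \int[leb3 R]_eta integrand a w m eta.
Proof.
move=> ww; apply: esum_ge0 => m _.
by apply: integral_ge0 => eta _; exact: integrand_ge0.
Qed.

Lemma wnorm20sq_ge0 w : weight w -> 0 <= wnorm20sq F w.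
Proof.
move=> ww; apply: sume_ge0 => a _.
by apply: mule_ge0; [rewrite lee_fin | exact: esum_integral_ge0].
Qed.

Lemma wnorm20sqD w1 w2 : weight w1 -> weight w2 ->
  wnorm20sq F (fun m eta => w1 m eta + w2 m eta)%R = wnorm20sq F w1 + wnorm20sq F w2.
Proof.
move=> ww1 ww2; rewrite /wnorm20sq -big_split; apply: eq_bigr => a _ /=.
rewrite -ge0_muleDr ?esum_integral_ge0 //; congr (_ * _).
rewrite -esumD => [|m _|m _]; last 2 first.
- by apply: integral_ge0 => eta _; exact: integrand_ge0.
- by apply: integral_ge0 => eta _; exact: integrand_ge0.
apply: eq_esum => m _; rewrite -ge0_integralD //; last 4 first.
- by move=> eta _; exact: integrand_ge0.
- exact: measurable_integrand.
- by move=> eta _; exact: integrand_ge0.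
- exact: measurable_integrand.
by apply: eq_integral => eta _; rewrite /integrand -EFinD; congr EFin; ring.
Qed.

Lemma le_wnorm20sq w1 w2 : weight w1 -> weight w2 ->
  (forall m eta, w1 m eta <= w2 m eta)%R -> wnorm20sq F w1 <= wnorm20sq F w2.
Proof.
move=> ww1 ww2 le_w; apply: lee_sum => a _.
apply: lee_wpmul2l; first by rewrite lee_fin.
apply: le_esum => m _; apply: ge0_le_integral => //.
- by move=> eta _; exact: integrand_ge0.
- exact: measurable_integrand.
- exact: measurable_integrand.
by move=> eta _; rewrite lee_fin ler_wpM2r ?csq_ge0 // ler_wpM2l ?csq_ge0.
Qed.

Lemma wnorm20sqZ_le (c : R) w : (0 <= c)%R -> weight w ->
  wnorm20sq F (fun m eta => c * w m eta)%R <= c%:E * wnorm20sq F w.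
Proof.
move=> c_ge0 ww; rewrite /wnorm20sq ge0_sume_distrr; last first.
  by move=> a _; apply: mule_ge0; [rewrite lee_fin | exact: esum_integral_ge0].
apply: lee_sum => a _; rewrite muleCA; apply: lee_wpmul2l; first by rewrite lee_fin.
apply: le_trans; last apply: esumZl_le => //; last first.
  by move=> m; apply: integral_ge0 => eta _; exact: integrand_ge0.
apply: le_esum => m _.
under eq_integral => eta _ do rewrite mulrCA -mulrA EFinM.
rewrite ge0_integralZl //; first exact: measurable_integrand.
by move=> eta _; exact: integrand_ge0.
Qed.

Lemma wnorm20sq_sum (I : Type) (s : seq I) (w : I -> Z3 -> R3 R -> R) :
  (forall i, weight (w i)) ->
  wnorm20sq F (fun m eta => \sum_(i <- s) w i m eta)%R =
    \sum_(i <- s) wnorm20sq F (w i).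
Proof.
move=> ww; elim: s => [|i s IH].
  rewrite big_nil /wnorm20sq big1 // => a _.
  rewrite esum1 ?mule0 // => m _; apply: integral0_eq => eta _.
  by rewrite big_nil mulr0 mul0r.
under eq_fun do under eq_fun do rewrite big_cons.
by rewrite wnorm20sqD ?IH ?big_cons //; exact: weight_sum.
Qed.

End WeightedNorm.

Section Symbols.
Variable R : realType.
Variable tau : R.
Hypothesis tau_ge0 : 0 <= tau.
Local Open Scope complex_scope.

Let iC_neq0 : 'i != 0 :> R[i].
Proof. by rewrite eq_complex /= oner_eq0 andbF. Qed.

Let realC_divn (x : R) (n : nat) : (x / n.+1%:R)%:C = x%:C / n.+1%:R.
Proof.
rewrite rmorphM (rmorphV (real_complex R)) ?unitfE ?pnatr_eq0 //.
by rewrite rmorph_nat.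
Qed.

Lemma Lam1_symE m eta : Lam1_sym tau m eta =
  ((tau `^ (1/2) * eta.1.1 + tau `^ (3/2) * m.1.1%:~R) / 2)%:C.
Proof.
rewrite /Lam1_sym /sym_dv1 /sym_dx1 realC_divn rmorphD !rmorphM.
by rewrite (rmorph_int (real_complex R)); field.
Qed.

Lemma Lam2_symE m eta : Lam2_sym tau m eta =
  (Num.sqrt 3 * (3 * tau `^ (1/2) * eta.1.1 + tau `^ (3/2) * m.1.1%:~R) / 6)%:C.
Proof.
rewrite /Lam2_sym /sym_dv1 /sym_dx1 realC_divn !rmorphM rmorphD !rmorphM.
by rewrite (rmorph_int (real_complex R)) (rmorph_nat (real_complex R)); field.
Qed.

Lemma sum_csq_Lam_sym m eta : \sum_(j < 2) csq (Lam_sym tau j m eta) = Msym tau m eta.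
Proof.
rewrite big_ord_recl big_ord1 /Lam_sym /= Lam1_symE Lam2_symE !csqC /Msym.
rewrite (powR_halfE 3 tau_ge0).
have tauE : tau = (tau `^ (1 / 2)) ^+ 2 by rewrite (powR_half_sqr 1 tau_ge0) expr1.
move: (tau `^ (1 / 2)) tauE => s ->.
have sqrt3 : Num.sqrt 3 ^+ 2 = 3 :> R by rewrite sqr_sqrtr.
by rewrite !expr_div_n !exprMn sqrt3; field.
Qed.

Lemma Msym_ge0 m eta : 0 <= Msym tau m eta.
Proof. by rewrite -sum_csq_Lam_sym sumr_ge0 // => j _; exact: csq_ge0. Qed.

Let measurable_v1 : measurable_fun setT (fun eta : R3 R => eta.1.1).
Proof. exact: measurableT_comp measurable_fst measurable_fst. Qed.

Lemma Lam_sym_affine j : exists a b : R,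
  forall m eta, Lam_sym tau j m eta = (a * eta.1.1 + b * m.1.1%:~R)%:C.
Proof.
rewrite /Lam_sym; case: ifP => _.
  exists (tau `^ (1/2) / 2), (tau `^ (3/2) / 2) => m eta.
  by rewrite Lam1_symE; congr _%:C; ring.
exists (Num.sqrt 3 * 3 * tau `^ (1/2) / 6), (Num.sqrt 3 * tau `^ (3/2) / 6) => m eta.
by rewrite Lam2_symE; congr _%:C; ring.
Qed.

Lemma weight_csq_Lam_sym j : weight (fun m eta => csq (Lam_sym tau j m eta)).
Proof.
split=> [m eta|m]; first exact: csq_ge0.
have [a [b Lam_jE]] := Lam_sym_affine j.
under eq_fun do rewrite Lam_jE csqC.
apply: measurable_funX; apply: measurable_funD; last exact: measurable_cst.
by apply: measurable_funM; [exact: measurable_cst | exact: measurable_v1].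
Qed.

Lemma weight_csq_Mpow_sym sigma : weight (fun m eta => csq (Mpow_sym tau sigma m eta)).
Proof.
split=> [m eta|m]; first exact: csq_ge0.
under eq_fun do rewrite csqC.
apply: measurable_funX; apply: (measurableT_comp (measurable_powR _)).
apply: measurable_funD; last exact: measurable_cst.
apply: measurable_funD; apply: measurable_funM; try exact: measurable_cst.
  exact: measurable_funX measurable_v1.
exact: measurable_v1.
Qed.

End Symbols.

Lemma foldr_mult (R : realType) (I : Type) (P : I -> symbol R) (s : seq I) F :
  foldr (fun k G => mult (P k) G) F s = mult (fun m eta => \prod_(k <- s) P k m eta) F.
Proof.
elim: s => [|k s IH] /=; apply/funext => m; apply/funext => eta.
  by rewrite /mult big_nil mul1r.
by rewrite IH /mult big_cons mulrA.
Qed.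

Section Norms.
Variables (R : realType) (tau : R) (g : R3 R -> R3 R -> R[i]).
Hypothesis tau_ge0 : 0 <= tau.
Hypothesis mF : forall m, measurable_fun setT (fun eta => csq (fourier g m eta)).
Local Open Scope ereal_scope.

Let csq_Mpow_sym_half k m eta :
  csq (Mpow_sym tau (k%:R / 2) m eta) = (Msym tau m eta ^+ k)%R.
Proof. by rewrite csqC powR_half_sqr // Msym_ge0. Qed.

Lemma LamPow_norm20sqE l : LamPow_norm20sq tau l g = Mpow_norm20sq tau (l%:R / 2) g.
Proof.
have wordE (j : l.-tuple 'I_2) :
    norm20sq (foldr (fun k G => mult (Lam_sym tau k) G) (fourier g) j) =
    wnorm20sq (fourier g) (fun m eta => \prod_(k <- j) csq (Lam_sym tau k m eta))%R.
  rewrite foldr_mult norm20sq_mult; congr wnorm20sq.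
  by apply/funext => m; apply/funext => eta; exact: csq_prod.
rewrite /LamPow_norm20sq /Mpow_norm20sq norm20sq_mult.
under eq_bigr => j _ do rewrite wordE.
rewrite -wnorm20sq_sum //; last first.
  by move=> j; apply: weight_prod => k; exact: weight_csq_Lam_sym.
congr wnorm20sq; apply/funext => m; apply/funext => eta.
by rewrite sum_tuple_prod sum_csq_Lam_sym // csq_Mpow_sym_half.
Qed.

Lemma Mpow_norm20sq_interp n :
  (forall k, Mpow_norm20sq tau (k%:R / 2) g < +oo) ->
  Mpow_norm20sq tau (n.+1%:R / 2) g <=
    sqrte (Mpow_norm20sq tau (n.+2%:R / 2) g) * sqrte (Mpow_norm20sq tau (n%:R / 2) g).
Proof.
rewrite /Mpow_norm20sq => Mfin.
apply: lee_sqrteM_AMGM => //; rewrite ?norm20sq_mult ?wnorm20sq_ge0 //;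
  try exact: weight_csq_Mpow_sym.
move=> lam lam_gt0.
set w := fun k m eta => csq (Mpow_sym tau (k%:R / 2) m eta).
have wZ c k : (0 <= c)%R -> weight (fun m eta => c * w k m eta)%R.
  by move=> c_ge0; apply: weightM; [exact: weight_cst | exact: weight_csq_Mpow_sym].
have lam2_ge0 : (0 <= lam / 2)%R by rewrite divr_ge0 // ltW.
have lamV2_ge0 : (0 <= lam^-1 / 2)%R by rewrite divr_ge0 // invr_ge0 ltW.
apply: (@le_trans _ _ (wnorm20sq (fourier g)
    (fun m eta => lam / 2 * w n.+2 m eta + lam^-1 / 2 * w n m eta)%R)).
  apply: le_wnorm20sq => //; first exact: weight_csq_Mpow_sym.
    by apply: weightD; exact: wZ.
  by move=> m eta; rewrite /w !csq_Mpow_sym_half exprS_le_AMGM // Msym_ge0.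
rewrite wnorm20sqD //; [|exact: wZ _ _ lam2_ge0|exact: wZ _ _ lamV2_ge0].
by apply: leeD; apply: wnorm20sqZ_le => //; exact: weight_csq_Mpow_sym.
Qed.

End Norms.

Theorem lemma4p5 (R : realType) (t0 t : R) (l : nat)
    (g : R3 R -> R3 R -> R[i]) :
  0 < t0 -> t0 <= 1 / 2 -> t0 <= t -> t <= 1 -> (0 < l)%N ->
  (* g is a (sufficiently regular) function on T^3 x R^3 *)
  periodic_x g ->
  (leb6 R).-integrable (@xpart R @^-1` @cell R)
     (fun p => (complex.Re (g (xpart p) (vpart p)))%:E) ->
  (leb6 R).-integrable (@xpart R @^-1` @cell R)
     (fun p => (complex.Im (g (xpart p) (vpart p)))%:E) ->
  (forall m : Z3, measurable_fun setT (fun eta => complex.Re (fourier g m eta))) ->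
  (forall m : Z3, measurable_fun setT (fun eta => complex.Im (fourier g m eta))) ->
  (forall k : nat, (Mpow_norm20sq (t - t0) (k%:R / 2) g < +oo)%E) ->
  (~~ odd l ->
     (LamPow_norm20sq (t - t0) l g <= Mpow_norm20sq (t - t0) (l%:R / 2) g)%E) /\
  (odd l ->
     (LamPow_norm20sq (t - t0) l g <= Mpow_norm20sq (t - t0) (l%:R / 2) g)%E /\
     (Mpow_norm20sq (t - t0) (l%:R / 2) g <=
        sqrte (Mpow_norm20sq (t - t0) (l.+1%:R / 2) g) *
        sqrte (Mpow_norm20sq (t - t0) (l.-1%:R / 2) g))%E).
Proof.
(* only tau = t - t0 >= 0 and the measurability of the Fourier transform
   matter *)
move=> _ _ t0_le_t _ l_gt0 _ _ _ mRe mIm Mfin.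
have tau_ge0 : 0 <= t - t0 by rewrite subr_ge0.
have mF m : measurable_fun setT (fun eta => csq (fourier g m eta)).
  by apply: measurable_csq; [exact: mRe | exact: mIm].
rewrite LamPow_norm20sqE //; split=> // _; split=> //.
by case: l l_gt0 => // n _; exact: Mpow_norm20sq_interp.
Qed.
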